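(* Let $F$ be a clause-set, and let $\mathbb{U}_F$ be the set of all $F' \subseteq F$ with $\mathrm{var}(F') = \mathrm{var}(F)$, $\delta(F') \ge 1$ and $F'$ unsatisfiable. Then $F \in \mathcal{VMU}$ if and only if $F \in \mathbb{U}_F$ and all minimal elements of $\mathbb{U}_F$ with respect to the subset relation are minimally unsatisfiable.
   Context: Literals come with a fixed-point-free involution $x \mapsto \overline{x}$; variables are positive literals. A clause is a finite set $C$ of literals with $C \cap \overline{C} = \emptyset$; a clause-set is a finite set of clauses. $\mathrm{var}(F)$, $n(F) = |\mathrm{var}(F)|$, $c(F) = |F|$, $\delta(F) = c(F) - n(F)$. $F$ is satisfiable iff some assignment of truth values makes some literal of every clause true. $F$ is minimally unsatisfiable if it is unsatisfiable and $F \setminus \{C\}$ is satisfiable for every $C \in F$. $\mathcal{VMU}$ is the class of unsatisfiable clause-sets $F$ such that every unsatisfiable $F' \subseteq F$ has $\mathrm{var}(F') = \mathrm{var}(F)$. *)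

From HB Require Import structures.
From mathcomp Require Import all_boot all_order all_algebra.
From mathcomp Require Import finmap.
Set Implicit Arguments. Unset Strict Implicit. Unset Printing Implicit Defensive.
Local Open Scope fset_scope.

(* Literals over a variable type V: a pair (v, b); (v,true) is the positive
   literal (= the variable v), (v,false) its complement. *)
Definition lit (V : choiceType) := (V * bool)%type.

Definition compl (V : choiceType) (x : lit V) : lit V := (x.1, ~~ x.2).

Definition is_clause (V : choiceType) (C : {fset lit V}) : Prop :=
  forall x, x \in C -> compl x \notin C.

Definition is_clauseset (V : choiceType) (F : {fset {fset lit V}}) : Prop :=
  forall C, C \in F -> is_clause C.

Definition varF (V : choiceType) (F : {fset {fset lit V}}) : {fset V} :=
  \bigcup_(C <- F) [fset x.1 | x in C].

Definition nvar (V : choiceType) (F : {fset {fset lit V}}) : nat := #|` varF F|.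
Definition ncl (V : choiceType) (F : {fset {fset lit V}}) : nat := #|` F|.

Definition delta (V : choiceType) (F : {fset {fset lit V}}) : int :=
  (ncl F)%:Z - (nvar F)%:Z.

Definition lit_true (V : choiceType) (phi : V -> bool) (x : lit V) : bool :=
  phi x.1 == x.2.

Definition satisfiable (V : choiceType) (F : {fset {fset lit V}}) : Prop :=
  exists phi : V -> bool, forall C, C \in F -> exists2 x, x \in C & lit_true phi x.

Definition MU (V : choiceType) (F : {fset {fset lit V}}) : Prop :=
  ~ satisfiable F /\ forall C, C \in F -> satisfiable (F `\ C).

Definition VMU (V : choiceType) (F : {fset {fset lit V}}) : Prop :=
  ~ satisfiable F /\
  forall F' : {fset {fset lit V}}, F' `<=` F -> ~ satisfiable F' -> varF F' = varF F.

Definition UF (V : choiceType) (F F' : {fset {fset lit V}}) : Prop :=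
  [/\ F' `<=` F, varF F' = varF F, (1 <= delta F')%R & ~ satisfiable F'].

Definition minimal_UF (V : choiceType) (F F' : {fset {fset lit V}}) : Prop :=
  UF F F' /\ forall F'', UF F F'' -> F'' `<=` F' -> F'' = F'.

From HB Require Import structures.
From mathcomp Require Import all_boot all_order all_algebra.
From mathcomp Require Import finmap zify.
From Stdlib Require Import Classical.
Set Implicit Arguments. Unset Strict Implicit. Unset Printing Implicit Defensive.
Import Order.TTheory.
Local Open Scope fset_scope.

(* Forward direction: in a VMU clause-set every minimally unsatisfiable
   subset uses all variables, and has deficiency at least 1 by Tarsi's lemma;
   this gives F in U_F, and a minimal element of U_F that were not minimally
   unsatisfiable would contain a smaller such subset, itself in U_F.
   Backward direction: let F0 be a minimally unsatisfiable subset of F with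
   var(F0) <> var(F).  Take G minimal among the elements of U_F containing F0,
   and a minimal element M of U_F inside G; then G is the union of M and F0,
   and M is minimally unsatisfiable.  The clauses H = G \ F0 lie in M, and M \ H only uses
   var(F0).  Since a minimally unsatisfiable set has no matching autarky,
   Hall's theorem forces H to have more clauses than variables outside
   var(F0), whence delta(G) >= 2.  But then minimality of G gives every clause
   of H a private variable outside var(F0), the reverse inequality. *)

Lemma ex_minimal_fsubset (T : choiceType) (P : {fset T} -> Prop) X : P X ->
  exists2 Y, Y `<=` X & P Y /\ forall Z, P Z -> Z `<=` Y -> Z = Y.
Proof.
elim/finSet_rect: X => X IH PX.
have [[Z ZX PZ] | noZ] := classic (exists2 Z, Z `<` X & P Z).
  have [Y YZ minY] := IH Z ZX PZ.
  by exists Y => //; apply: fsubset_trans YZ (fproper_sub ZX).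
exists X => //; split => // Z PZ ZX; apply: NNPP => ZnX; apply: noZ.
by exists Z => //; rewrite fproperEneq ZX andbT; apply/eqP.
Qed.
Arguments ex_minimal_fsubset {T} P {X}.

Lemma ex_argmax_fsubset (T : choiceType) (f : {fset T} -> int) S :
  exists2 K, K `<=` S & forall K', K' `<=` S -> (f K' <= f K)%R.
Proof.
have S0 : fset0 \in fpowerset S by rewrite fpowersetE fsub0set.
case: (@arg_maxP _ _ (fpowerset S) [` S0] xpredT (fun K => f (val K))) => //.
move=> K _ maxK; exists (val K); first by rewrite -fpowersetE (valP K).
by move=> K'; rewrite -fpowersetE => K'S; apply: (maxK [` K'S]).
Qed.

Section Clauses.
Variable V : choiceType.
Implicit Types (F G H K L M S : {fset {fset lit V}}) (W X : {fset V}).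

Lemma varFP F v :
  reflect (exists2 C, C \in F & exists2 x, x \in C & x.1 = v) (v \in varF F).
Proof.
apply: (iffP (bigfcupP F v (fun C => [fset x.1 | x in C]) xpredT)).
  by move=> [C /andP[CF _] /imfsetP [x /= xC ->]]; exists C => //; exists x.
by move=> [C CF [x xC <-]]; exists C; [rewrite CF | apply/imfsetP; exists x].
Qed.

Lemma varFS F G : F `<=` G -> varF F `<=` varF G.
Proof.
move=> /fsubsetP FG; apply/fsubsetP => v /varFP [C /FG CG xC].
by apply/varFP; exists C.
Qed.

Lemma varFU F G : varF (F `|` G) = varF F `|` varF G.
Proof.
apply/eqP; rewrite eqEfsubset fsubUset.
rewrite (varFS (fsubsetUl F G)) (varFS (fsubsetUr F G)) !andbT.
apply/fsubsetP => v /varFP [C /fsetUP [] CF xC]; apply/fsetUP; [left | right];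
  by apply/varFP; exists C.
Qed.

Lemma varF0 : varF (fset0 : {fset {fset lit V}}) = fset0.
Proof. by apply/fsetP => v; rewrite inE; apply/varFP => -[C]; rewrite inE. Qed.

Lemma varF_fsetD1 F C : varF F `<=` varF [fset C] `|` varF (F `\ C).
Proof.
by rewrite -varFU varFS //; apply/fsubsetP => D DF; rewrite !inE DF andbT orbN.
Qed.

Lemma satisfiableS F G : F `<=` G -> satisfiable G -> satisfiable F.
Proof. by move=> /fsubsetP FG [phi satG]; exists phi => C /FG /satG. Qed.

Lemma satisfiable0 : satisfiable (fset0 : {fset {fset lit V}}).
Proof. by exists (fun=> true) => C; rewrite inE. Qed.

Lemma delta_ge1 F : (1 <= delta F)%R = (nvar F < ncl F).
Proof. by rewrite /delta; apply/idP/idP; lia. Qed.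

Definition sat_on X (phi : V -> bool) S :=
  forall C, C \in S -> exists2 x, x \in C & (x.1 \in X) && lit_true phi x.

Lemma sat_onS X Y phi S : X `<=` Y -> sat_on X phi S -> sat_on Y phi S.
Proof.
move=> /fsubsetP XY satS C /satS [x xC /andP[/XY xY xT]].
by exists x; rewrite ?xY.
Qed.

Lemma sat_on_satisfiable X phi S : sat_on X phi S -> satisfiable S.
Proof. by move=> satS; exists phi => C /satS [x xC /andP[_ xT]]; exists x. Qed.

Lemma satisfiable_sat_on S : satisfiable S -> exists phi, sat_on (varF S) phi S.
Proof.
move=> [phi satS]; exists phi => C CS; have [x xC xT] := satS C CS.
by exists x; rewrite // xT andbT; apply/varFP; exists C => //; exists x.
Qed.

Lemma sat_on_glue X1 X2 phi1 phi2 S1 S2 : [disjoint X1 & X2] ->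
  sat_on X1 phi1 S1 -> sat_on X2 phi2 S2 ->
  sat_on (X1 `|` X2) (fun v => if v \in X1 then phi1 v else phi2 v) (S1 `|` S2).
Proof.
move=> /fdisjointP X12 sat1 sat2 C /fsetUP [/sat1 | /sat2] [x xC /andP[xX xT]];
  exists x => //; rewrite inE xX ?orbT /lit_true.
  by rewrite xX.
by have /negPf -> : x.1 \notin X1 by apply: contraTN xX => /X12.
Qed.

(* The deficiency of S once the variables of W are deleted. *)
Definition surplus W S : int := (#|` S|)%:Z - (#|` varF S `\` W|)%:Z.

Definition hall W S := forall L, L `<=` S -> (surplus W L <= 0)%R.

Lemma surplusU W K L : [disjoint K & L] ->
  (surplus W K + surplus (W `|` varF K) L <= surplus W (K `|` L))%R.
Proof.
move=> KL; have /eqP cardKL : #|` K `|` L| == (#|` K| + #|` L|)%N.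
  by rewrite (leq_card_fsetU K L).2.
suff : #|` varF (K `|` L) `\` W| <= #|` varF K `\` W| + #|` varF L `\` (W `|` varF K)|.
  by rewrite /surplus cardKL => ?; lia.
apply: leq_trans (leq_card_fsetU _ _); apply: fsubset_leq_card.
apply/fsubsetP => v; rewrite varFU !inE.
by case: (v \in W); case: (v \in varF K).
Qed.

Lemma surplusU1 W v L : (surplus (v |` W) L <= surplus W L + 1)%R.
Proof.
suff : #|` varF L `\` W| <= #|` varF L `\` (v |` W)| + 1.
  by rewrite /surplus => ?; lia.
rewrite -(cardfs1 v) addnC; apply: leq_trans (leq_card_fsetU _ _).
by apply: fsubset_leq_card; apply/fsubsetP => w; rewrite !inE; case: eqP.
Qed.

Lemma hall_max_surplus W S K : K `<=` S ->
  (forall K', K' `<=` S -> (surplus W K' <= surplus W K)%R) ->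
  hall (W `|` varF K) (S `\` K).
Proof.
move=> KS maxK L; rewrite fsubsetD fdisjoint_sym => /andP[LS KL].
have := maxK (K `|` L); rewrite fsubUset KS LS => /(_ isT).
by have := surplusU W KL; lia.
Qed.

(* Hall's marriage theorem: the clauses of S get distinct variables outside W,
   which can be set independently. *)
Lemma hall_sat W S : hall W S -> exists phi, sat_on (varF S `\` W) phi S.
Proof.
elim/finSet_rect: S W => S IH W hallS.
(* Either a nonempty proper L is critical and L, S \ L are solved separately,
   or one clause of S may take any of its variables. *)
have [[L [LS L0 LnS tightL]] | noTight] := classic
  (exists L, [/\ L `<=` S, L != fset0, L != S & surplus W L = 0%R]).
  have ltLS : L `<` S by rewrite fproperEneq LnS LS.
  have [phi1 satL] : exists phi, sat_on (varF L `\` W) phi L.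
    by apply: IH => // L' L'L; apply/hallS/(fsubset_trans L'L LS).
  have [phi2 satSL] :
      exists phi, sat_on (varF (S `\` L) `\` (W `|` varF L)) phi (S `\` L).
    apply: IH; last by apply: hall_max_surplus => // K KS; rewrite tightL hallS.
    by rewrite -[X in _ `<` X]fsetD0 fsetDpS // fproper0.
  exists (fun v => if v \in varF L `\` W then phi1 v else phi2 v).
  have -> : S = L `|` (S `\` L) by rewrite fsetUDl fsetDv fsetD0; apply/esym/fsetUidPr.
  apply: sat_onS (sat_on_glue _ satL satSL).
    by rewrite varFU fsetDUl fsetUS // fsetDS // fsubsetUl.
  by apply/fdisjointP => w; rewrite !inE => /andP[_ ->]; rewrite orbT.
have [-> | /fset0Pn [C CS]] := eqVneq S fset0.
  by exists (fun=> true) => C; rewrite inE.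
have [v vC vW] : exists2 v, v \in varF [fset C] & v \notin W.
  have := hallS [fset C]; rewrite fsub1set CS /surplus cardfs1 => /(_ isT) h.
  have /fset0Pn [v] : varF [fset C] `\` W != fset0 by rewrite -cardfs_gt0; lia.
  by rewrite inE => /andP[]; exists v.
have [x xC xv] : exists2 x, x \in C & x.1 = v.
  by case/varFP: vC => D; rewrite inE => /eqP ->.
have [phi satSC] :
    exists phi, sat_on (varF (S `\ C) `\` (v |` W)) phi (S `\ C).
  apply: IH (fproperD1 CS) _ _ => L; rewrite fsubsetD1 => /andP[LS CL].
  have [-> | L0] := eqVneq L fset0; first by rewrite /surplus varF0 fset0D cardfs0.
  have LnS : L != S by apply: contraNneq CL => ->.
  have : surplus W L != 0%R by apply/eqP => tightL; apply: noTight; exists L.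
  by move: (hallS L LS) (surplusU1 W v L) => *; lia.
exists (fun w => if w \in [fset v] then x.2 else phi w).
rewrite -(fsetD1K CS); apply: sat_onS (sat_on_glue _ _ satSC).
- rewrite varFU fsetDUl fsetUSS // ?fsub1set ?inE ?vC ?vW //.
  by rewrite fsetDS // fsubsetUr.
- by rewrite fdisjoint1X !inE eqxx.
- by move=> D; rewrite inE => /eqP ->; exists x; rewrite ?inE ?xv /lit_true ?eqxx.
Qed.

Lemma MU_not_hall W M H : MU M -> H `<=` M -> H != fset0 ->
  varF (M `\` H) `<=` W -> ~ hall W H.
Proof.
move=> [unsatM minM] HM /fset0Pn [C CH] MHW /hall_sat [phi satH].
have [psi satMH] : exists psi, sat_on (varF (M `\` H)) psi (M `\` H).
  apply/satisfiable_sat_on/(satisfiableS _ (minM C (fsubsetP HM C CH))).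
  by rewrite fsetDS // fsub1set.
apply/unsatM/(satisfiableS _ (sat_on_satisfiable (sat_on_glue _ satMH satH))).
  by rewrite fsetUC -fsubDset.
by apply/fdisjointP => v /(fsubsetP MHW) vW; rewrite inE vW.
Qed.

(* For K of maximal surplus in H, the clauses of H \ K satisfy Hall's condition
   outside W and var K, which MU_not_hall forbids unless K = H. *)
Lemma MU_surplus_gt0 W M H : MU M -> H `<=` M -> H != fset0 ->
  varF (M `\` H) `<=` W -> (0 < surplus W H)%R.
Proof.
move=> muM HM H0 MHW; have [K KH maxK] := ex_argmax_fsubset (surplus W) H.
have KH' : K = H.
  apply/eqP; rewrite eqEfsubset KH /=; apply: contraT => HnK.
  have HKM : H `\` K `<=` M by apply: fsubset_trans (fsubsetDl _ _) HM.
  exfalso; apply: (MU_not_hall muM HKM _ _ (hall_max_surplus KH maxK)).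
    by rewrite fsetD_eq0.
  have MHK : M `\` (H `\` K) `<=` (M `\` H) `|` K.
    apply/fsubsetP => D; rewrite !inE.
    by case: (D \in K); case: (D \in H); case: (D \in M).
  by apply: fsubset_trans (varFS MHK) _; rewrite varFU fsetSU.
rewrite ltNge; apply/negP => sH; apply: (MU_not_hall muM HM H0 MHW) => L LH.
by apply: le_trans (maxK L LH) _; rewrite KH'.
Qed.

Lemma MU_nvar_lt_ncl F : MU F -> nvar F < ncl F.
Proof.
move=> muF; have F0 : F != fset0.
  by apply/eqP => F0; apply: muF.1; rewrite F0; apply: satisfiable0.
have := MU_surplus_gt0 (W := fset0) muF (fsubset_refl F) F0.
by rewrite fsetDv varF0 fsub0set /surplus fsetD0 => /(_ isT) ?; rewrite /nvar /ncl; lia.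
Qed.

Lemma ex_MU_fsubset F : ~ satisfiable F -> exists2 F0, F0 `<=` F & MU F0.
Proof.
move=> unsatF.
have [F0 F0F [unsatF0 minF0]] := ex_minimal_fsubset (fun G => ~ satisfiable G) unsatF.
exists F0 => //; split => // C CF0; apply: NNPP => unsatF0C.
by have /fsetP /(_ C) := minF0 _ unsatF0C (fsubsetDl _ _); rewrite !inE eqxx CF0.
Qed.

Lemma card_le_private_varF W H :
  (forall C, C \in H ->
    exists2 v, v \in varF [fset C] `\` W & v \notin varF (H `\ C)) ->
  #|` H| <= #|` varF H `\` W|.
Proof.
elim/finSet_rect: H => H IH privH.
have [-> | /fset0Pn [C CH]] := eqVneq H fset0; first by rewrite cardfs0.
have [v vCW vHC] := privH C CH.
have IHC : #|` H `\ C| <= #|` varF (H `\ C) `\` W|.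
  apply: IH (fproperD1 CH) _ => D /fsetD1P [DC DH].
  have [w wDW wHD] := privH D DH; exists w => //.
  apply: contra wHD; apply/fsubsetP/varFS.
  by apply/fsubsetP => E; rewrite !inE => /and3P[-> _ ->].
rewrite (cardfsD1 C H) CH add1n.
apply: leq_trans (_ : #|` v |` (varF (H `\ C) `\` W)| <= _).
  by rewrite cardfsU1 inE (negPf vHC) andbF.
apply: fsubset_leq_card; rewrite fsubUset fsub1set fsetSD ?varFS ?fsubsetDl // andbT.
move: vCW; apply/fsubsetP/fsetSD/varFS; by rewrite fsub1set.
Qed.

Lemma VMU_UF F : VMU F -> UF F F.
Proof.
move=> [unsatF fullF]; split=> //; rewrite delta_ge1.
have [F0 F0F muF0] := ex_MU_fsubset unsatF.
have := MU_nvar_lt_ncl muF0; have := fsubset_leq_card F0F.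
by rewrite /nvar /ncl (fullF F0 F0F muF0.1) => *; lia.
Qed.

Lemma VMU_minimal_UF_MU F F' : VMU F -> minimal_UF F F' -> MU F'.
Proof.
move=> [_ fullF] [[F'F _ _ unsatF'] minF']; split=> // C CF'.
apply: NNPP => unsatF'C; have [N NF'C muN] := ex_MU_fsubset unsatF'C.
have NF' : N `<=` F' := fsubset_trans NF'C (fsubsetDl _ _).
have NF := fsubset_trans NF' F'F.
have UN : UF F N.
  by split=> //; [exact: fullF NF muN.1 | rewrite delta_ge1 MU_nvar_lt_ncl | case: muN].
by move: NF'C; rewrite (minF' N UN NF') => /fsubsetP /(_ C CF'); rewrite !inE eqxx.
Qed.

Section MinimalUFAbove.
Variables F F0 G : {fset {fset lit V}}.
Hypotheses (unsatF0 : ~ satisfiable F0) (F0G : F0 `<=` G) (UG : UF F G).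
Hypothesis minG : forall G', F0 `<=` G' -> UF F G' -> G' `<=` G -> G' = G.

Lemma minimal_UF_above_eqU M : M `<=` G -> UF F M -> M `|` F0 = G.
Proof.
move=> MG [MF fullM dM _]; apply: minG; last by rewrite fsubUset MG F0G.
  exact: fsubsetUr.
have fullMF0 : varF (M `|` F0) = varF F.
  by rewrite varFU fullM; apply/fsetUidPl/varFS/(fsubset_trans F0G); case: UG.
split=> //; first by rewrite fsubUset MF (fsubset_trans F0G); case: UG.
  rewrite delta_ge1 /nvar /ncl fullMF0 -fullM.
  by apply: leq_trans (fsubset_leq_card (fsubsetUl _ _)); rewrite -delta_ge1.
by move/(satisfiableS (fsubsetUr M F0)).
Qed.

Lemma minimal_UF_above_private_varF : (nvar G).+1 < ncl G ->
  forall C, C \in G `\` F0 ->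
    exists2 v, v \in varF [fset C] `\` varF F0 & v \notin varF ((G `\` F0) `\ C).
Proof.
have [GF fullG _ _] := UG; move=> dG C /fsetDP [CG CF0].
have F0GC : F0 `<=` G `\ C by rewrite fsubsetD1 F0G CF0.
have : ~~ (varF G `<=` varF (G `\ C)).
  apply/negP => GGC; have fullGC : varF (G `\ C) = varF F.
    by rewrite -fullG; apply/eqP; rewrite eqEfsubset GGC varFS ?fsubsetDl.
  have UGC : UF F (G `\ C).
    split; [exact: fsubset_trans (fsubsetDl _ _) GF | by [] | | ].
      by rewrite delta_ge1 /nvar /ncl fullGC -fullG (cardfsD1 C G) CG in dG *.
    by move/(satisfiableS F0GC).
  by have /fsetP /(_ C) := minG F0GC UGC (fsubsetDl _ _); rewrite !inE eqxx CG.
case/fsubsetPn => v vG vGC; exists v.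
  have := fsubsetP (varF_fsetD1 G C) v vG; rewrite inE (negPf vGC) orbF => vC.
  by rewrite inE vC andbT; apply: contra vGC; apply/fsubsetP/varFS.
by apply: contra vGC; apply/fsubsetP/varFS/fsetSD/fsubsetDl.
Qed.

End MinimalUFAbove.

Lemma minimal_UF_MU_varF F F0 : UF F F -> (forall F', minimal_UF F F' -> MU F') ->
  F0 `<=` F -> MU F0 -> varF F0 = varF F.
Proof.
move=> UFF minMU F0F muF0; apply: NNPP => notfull.
have [G _ [[F0G UG] minG]] :=
  ex_minimal_fsubset (fun G => F0 `<=` G /\ UF F G) (conj F0F UFF).
have {}minG G' : F0 `<=` G' -> UF F G' -> G' `<=` G -> G' = G.
  by move=> F0G' UG'; apply: minG.
have [M MG minUM] := ex_minimal_fsubset (UF F) UG; have muM := minMU M minUM.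
have GE := minimal_UF_above_eqU muF0.1 F0G UG minG MG minUM.1.
set H := G `\` F0.
have HM : H `<=` M by rewrite /H -GE fsubDset fsetUC.
have H0 : H != fset0.
  apply/negP; rewrite /H fsetD_eq0 => GF0; apply: notfull.
  by apply/eqP; rewrite eqEfsubset varFS //=; case: UG => _ <- _ _; apply: varFS.
have MHF0 : varF (M `\` H) `<=` varF F0.
  by apply/varFS/fsubsetP => D; rewrite /H -GE !inE; case: (D \in M); case: (D \in F0).
have sH := MU_surplus_gt0 muM HM H0 MHF0.
have dG : (nvar G).+1 < ncl G.
  have F0H : [disjoint F0 & H] by apply/fdisjointP => D DF0; rewrite inE DF0.
  have F0HG : F0 `|` H = G by rewrite /H fsetUDl fsetDv fsetD0; apply/fsetUidPr.
  have := surplusU fset0 F0H; rewrite fset0U F0HG.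
  by move: sH (MU_nvar_lt_ncl muF0); rewrite /surplus /nvar /ncl !fsetD0 => *; lia.
have := card_le_private_varF (minimal_UF_above_private_varF muF0.1 F0G UG minG dG).
by rewrite -/H; move: sH; rewrite /surplus => *; lia.
Qed.
End Clauses.

Theorem lemma4p5 (V : choiceType) (F : {fset {fset lit V}}) :
  is_clauseset F ->
  (VMU F <-> UF F F /\ (forall F', minimal_UF F F' -> MU F')).
Proof.
move=> _; split=> [vmuF | [UFF minMU]].
  by split=> [|F']; [exact: VMU_UF | exact: VMU_minimal_UF_MU].
split=> [|F' F'F unsatF']; first by case: UFF.
have [F0 F0F' muF0] := ex_MU_fsubset unsatF'.
have F0F := fsubset_trans F0F' F'F.
apply/eqP; rewrite eqEfsubset varFS //= -(minimal_UF_MU_varF UFF minMU F0F muF0).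
exact: varFS.
Qed.
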